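(* Let $n\in\mathbb{N}$. (i) Let $S$ be a symmetric numerical semigroup and $A\subseteq\{x\in S\mid \frac{\mathrm{F}(S)}{2}<x<\mathrm{F}(S)\}$ with $\#A=n$ such that $S\setminus A$ is a numerical semigroup. Then $\mathrm{l}(S\setminus A)=2n$. (ii) Conversely, for every numerical semigroup $T$ with $\mathrm{l}(T)=2n$ there exist a symmetric numerical semigroup $S$ with $\mathrm{F}(S)=\mathrm{F}(T)$ and a set $A\subseteq\{x\in S\mid \frac{\mathrm{F}(S)}{2}<x<\mathrm{F}(S)\}$ with $\#A=n$ such that $T=S\setminus A$.
   Context: A numerical semigroup is a subset $S\subseteq\mathbb{N}$ closed under addition with $0\in S$ and $\mathbb{N}\setminus S$ finite; $\mathrm{F}(S)=\max(\mathbb{Z}\setminus S)$. $\mathrm{N}(S)=\{s\in S\mid s<\mathrm{F}(S)\}$, $\mathrm{L}(S)=\{x\in\mathbb{N}\setminus S\mid \mathrm{F}(S)-x\notin \mathrm{N}(S)\}$, $\mathrm{l}(S)=\#\mathrm{L}(S)$. A numerical semigroup is irreducible if it is not the intersection of two numerical semigroups properly containing it; symmetric means irreducible with odd Frobenius number. *)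

From mathcomp Require Import all_boot all_order all_algebra.
Set Implicit Arguments. Unset Strict Implicit. Unset Printing Implicit Defensive.
Import Order.TTheory GRing.Theory Num.Theory.
Local Open Scope ring_scope.

Definition numerical_semigroup (S : pred nat) : Prop :=
  S 0%N /\ (forall x y : nat, S x -> S y -> S (x + y)%N) /\
  exists m : nat, forall x : nat, (m <= x)%N -> S x.

(* f = F(S) = max (Z \ S).  Negative integers are never in S, so this says:
   f >= -1, every natural number > f is in S, and f is not in S when f >= 0. *)
Definition is_frob (S : pred nat) (f : int) : Prop :=
  -1 <= f /\ (forall x : nat, f < x%:Z -> S x) /\ (0 <= f -> ~~ S `|f|%N).

Definition Nset (S : pred nat) (f : int) (z : int) : bool :=
  (0 <= z) && S `|z|%N && (z < f).

Definition Lset (S : pred nat) (f : int) : pred nat :=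
  fun x => ~~ S x && ~~ Nset S f (f - x%:Z).

Definition card_eq (P : pred nat) (k : nat) : Prop :=
  exists s : seq nat, [/\ uniq s, (forall x, (x \in s) = P x) & size s = k].

Definition ns_irreducible (S : pred nat) : Prop :=
  numerical_semigroup S /\
  ~ (exists S1 S2 : pred nat,
       [/\ numerical_semigroup S1, numerical_semigroup S2,
           (forall x, S x -> S1 x) /\ (exists x, S1 x && ~~ S x),
           (forall x, S x -> S2 x) /\ (exists x, S2 x && ~~ S x)
         & forall x, S x = S1 x && S2 x]).

Definition ns_symmetric (S : pred nat) : Prop :=
  ns_irreducible S /\ forall f, is_frob S f -> odd `|f|%N.

Definition setminus (S A : pred nat) : pred nat := fun x => S x && ~~ A x.

From mathcomp Require Import all_boot all_algebra zify.

(* Let G >= 0 be the Frobenius number of T.  Then L(T) is the set of gaps x of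
   T whose reflection G - x is also a gap; it is invariant under x |-> G - x
   and contains G/2 when G is even, so l(T) = 2 #{x in L(T) | x > G/2} + [G even].
   A numerical semigroup with odd Frobenius number G is symmetric iff x \notin S
   implies G - x \in S.  (i) Removing from a symmetric S a set A of elements
   above G/2 keeps the Frobenius number and makes L equal to A u (G - A).
   (ii) Conversely, l(T) even forces G odd, and the upper half A of L(T) can be
   adjoined to T: if x \in A, t \in T and x + t is a gap, then x + t \in A.
   The semigroup T u A is symmetric and T = (T u A) \ A. *)

Set Implicit Arguments.
Unset Strict Implicit.

Lemma card_eq_count (P : pred nat) G k : (forall x, P x -> x <= G) ->
  card_eq P k <-> count P (iota 0 G.+1) = k.
Proof.
move=> P_le; have memP x : (x \in filter P (iota 0 G.+1)) = P x.
  by rewrite mem_filter mem_iota add0n ltnS andb_idr // => /P_le.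
split=> [[s [uniq_s mem_s <-]] | <-]; last first.
  by exists (filter P (iota 0 G.+1)); rewrite filter_uniq ?iota_uniq ?size_filter.
rewrite -size_filter; apply/perm_size/uniq_perm => //.
  by rewrite filter_uniq ?iota_uniq.
by move=> x; rewrite mem_s memP.
Qed.

Lemma card_eq_pred0 (P : pred nat) k : (forall x, ~~ P x) -> card_eq P k <-> k = 0.
Proof.
move=> notP; rewrite (@card_eq_count P 0) => [|x]; last by rewrite (negbTE (notP x)).
by rewrite /= (negbTE (notP 0)); split=> <-.
Qed.

Lemma perm_iota_reflect G : perm_eq (map (subn G) (iota 0 G.+1)) (iota 0 G.+1).
Proof.
apply: uniq_perm; rewrite ?iota_uniq //.
  rewrite map_inj_in_uniq ?iota_uniq // => x y.
  by rewrite !mem_iota add0n !ltnS => x_le y_le /eqP; lia.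
move=> x; rewrite mem_iota add0n ltnS; apply/mapP/idP => [[y _ ->] | x_le].
  exact: leq_subr.
by exists (G - x); rewrite ?mem_iota ?subKn //; lia.
Qed.

Lemma count_reflect_sym (P : pred nat) G :
    (forall x, x <= G -> P (G - x) = P x) ->
  count P (iota 0 G.+1) =
    2 * count (fun x => P x && (G < 2 * x)) (iota 0 G.+1) + (~~ odd G && P G./2).
Proof.
move=> P_sym; set s := iota 0 G.+1.
have split_count t : count P t = count (fun x => P x && (G < 2 * x)) t
    + count (fun x => P x && (2 * x < G)) t + count (fun x => P x && (2 * x == G)) t.
  by elim: t => //= x t ->; case: (P x) => /=; case: (ltngtP G (2 * x)); lia.
have lower_upper : count (fun x => P x && (2 * x < G)) s
    = count (fun x => P x && (G < 2 * x)) s.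
  rewrite -(permP (perm_iota_reflect G)) count_map; apply: eq_in_count.
  by move=> x; rewrite mem_iota /= => x_le; rewrite P_sym //; congr (_ && _); lia.
have middle : count (fun x => P x && (2 * x == G)) s = ~~ odd G && P G./2.
  rewrite (@eq_count _ _ (fun x => (x == G./2) && (~~ odd G && P G./2))); last first.
    move=> x; case: (eqVneq x G./2) => [-> | x_neq] /=.
      by rewrite andbC; congr (_ && _); apply/eqP/negPn; lia.
    by apply/negbTE/andP => -[_ /eqP]; lia.
  case: (~~ odd G && P G./2).
    rewrite (eq_count (a2 := pred1 G./2)) => [|x]; last by rewrite andbT.
    by rewrite count_uniq_mem ?iota_uniq // mem_iota; lia.
  by rewrite (eq_count (a2 := pred0)) ?count_pred0 // => x; rewrite andbF.
by rewrite split_count lower_upper middle; lia.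
Qed.

Lemma numerical_semigroupU (S A : pred nat) : numerical_semigroup S ->
    (forall x y, A x -> S y -> S (x + y) || A (x + y)) ->
    (forall x y, A x -> A y -> S (x + y) || A (x + y)) ->
  numerical_semigroup (fun x => S x || A x).
Proof.
move=> [S0 [S_add [m S_ge]]] AS AA; split; first by rewrite S0.
split; last by exists m => x /S_ge ->.
move=> x y /orP[Sx | Ax] /orP[Sy | Ay]; first by rewrite S_add.
- by rewrite addnC AS.
- exact: AS.
- exact: AA.
Qed.

Lemma numerical_semigroup_adjoin (S : pred nat) h : numerical_semigroup S ->
    (forall y, S y -> 0 < y -> S (h + y)) -> S (h + h) ->
  numerical_semigroup (fun x => S x || (x == h)).
Proof.
move=> nsS h_pf Shh; apply: numerical_semigroupU => // x y /eqP-> => [Sy | /eqP->].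
  by case: y Sy => [|y] Sy; rewrite ?addn0 ?eqxx ?orbT // h_pf.
by rewrite Shh.
Qed.

Lemma is_frobP (S : pred nat) (f : int) : S 0 -> is_frob S f ->
  (f = -1)%R /\ (forall x, S x) \/
  exists G : nat, [/\ f = Posz G, forall x, G < x -> S x & ~~ S G].
Proof.
move=> S0 [f_ge [S_gt notSf]]; case: f f_ge S_gt notSf => [G | k] f_ge S_gt notSf.
  right; exists G; split=> [//| x lt_Gx |]; last exact: notSf.
  by apply: S_gt; rewrite ltz_nat.
have k0 : k = 0 by move: f_ge; lia.
by left; split=> [|x]; [rewrite k0 | apply: S_gt; lia].
Qed.

Lemma ns_symmetric_full (S : pred nat) : (forall x, S x) -> ns_symmetric S.
Proof.
move=> S_full; split.
  split; first by split; [|split; [|exists 0]].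
  by case=> S1 [S2 [_ _ [_ [x /andP[_ /negP notSx]]] _ _]]; apply/notSx/S_full.
by move=> f /(is_frobP (S_full 0)) [[-> _] // | [G [_ _]]]; rewrite S_full.
Qed.

Definition upper_Lset (S : pred nat) (G : nat) : pred nat :=
  fun x => Lset S G x && (G < 2 * x).

Section Frobenius.

Variables (S : pred nat) (G : nat).
Hypotheses (S_gt_frob : forall x, G < x -> S x) (notS_frob : ~~ S G).

Lemma gap_leq_frob x : ~~ S x -> x <= G.
Proof. by rewrite leqNgt; apply: contra => /S_gt_frob. Qed.

Lemma is_frob_nat : is_frob S G.
Proof. by split=> //; split=> // x; rewrite ltz_nat; apply: S_gt_frob. Qed.

Hypothesis nsS : numerical_semigroup S.
Let S0 : S 0 := proj1 nsS.
Let S_add : forall x y, S x -> S y -> S (x + y) := proj1 (proj2 nsS).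

Lemma is_frob_natE f : is_frob S f -> f = Posz G.
Proof.
case/(is_frobP S0) => [[_ S_full] | [G' [-> S_gt' notSG']]].
  by move: notS_frob; rewrite S_full.
by congr Posz; apply/eqP; rewrite eqn_leq gap_leq_frob // leqNgt (contra (S_gt' G)).
Qed.

Lemma Lset_natE x : Lset S G x = ~~ S x && ~~ S (G - x).
Proof.
rewrite /Lset /Nset; have [Sx | notSx] //= := boolP (S x).
have x_pos : 0 < x by case: x notSx => //; rewrite S0.
rewrite subzn ?gap_leq_frob // ltz_nat ltn_subrL x_pos.
by rewrite (leq_trans x_pos (gap_leq_frob notSx)) !andbT.
Qed.

Lemma Lset_leq_frob x : Lset S G x -> x <= G.
Proof. by rewrite Lset_natE => /andP[/gap_leq_frob]. Qed.

Lemma Lset_frob_sym x : x <= G -> Lset S G (G - x) = Lset S G x.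
Proof. by move=> x_le; rewrite !Lset_natE subKn // andbC. Qed.

Lemma notS_frob_sub x : S x -> x <= G -> ~~ S (G - x).
Proof. by move=> Sx x_le; apply: contra notS_frob => /(S_add Sx); rewrite subnKC. Qed.

Lemma notS_frob_sub_addr x y :
  S y -> ~~ S (G - x) -> ~~ S (x + y) -> ~~ S (G - (x + y)).
Proof.
move=> Sy notSGx /gap_leq_frob xy_le; apply: contra notSGx => /S_add/(_ Sy).
suff -> : G - x = G - (x + y) + y by []; lia.
Qed.

Lemma Lset_half_frob : ~~ odd G -> Lset S G G./2.
Proof.
move=> evenG; have G_eq : G./2 + G./2 = G by lia.
have notS_half : ~~ S G./2 by apply: contra notS_frob => S_half; rewrite -G_eq S_add.
by rewrite Lset_natE -{2}G_eq addnK notS_half.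
Qed.

Lemma count_Lset : count (Lset S G) (iota 0 G.+1) =
  2 * count (upper_Lset S G) (iota 0 G.+1) + ~~ odd G.
Proof.
rewrite count_reflect_sym; last exact: Lset_frob_sym.
by case: (boolP (odd G)) => [// | /Lset_half_frob ->].
Qed.

(* A largest gap h with G - h also a gap lies above G/2 and satisfies
   h + (S \ 0) \subset S, so S u {h} and S u {G} are semigroups meeting in S. *)
Lemma irreducible_symmetric : ns_irreducible S -> odd G -> forall x, ~~ S x -> S (G - x).
Proof.
move=> [_ irrS] oddG x notSx; apply/negPn/negP => notSGx.
pose P h := ~~ S h && ~~ S (G - h).
have exP : exists h, P h by exists x; rewrite /P notSx.
have ub_P h : P h -> h <= G by case/andP => /gap_leq_frob.
case: (ex_maxnP exP ub_P) => h Ph h_max; have /andP[notSh notSGh] := Ph.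
have h_lt : h < G.
  by rewrite ltn_neqAle ub_P // andbT; apply/eqP => h_eq; move: notSGh; rewrite h_eq subnn S0.
have h_half : G < h + h.
  have : P (G - h) by rewrite /P subKn ?(ltnW h_lt) // notSGh.
  by move/h_max; move: oddG; lia.
have h_pf y : S y -> 0 < y -> S (h + y).
  move=> Sy y_pos; apply/negPn/negP => notShy.
  by have := h_max (h + y); rewrite /P notShy (notS_frob_sub_addr Sy) // => /(_ isT); lia.
apply: irrS; exists (fun x => S x || (x == h)), (fun x => S x || (x == G)); split.
- by apply: numerical_semigroup_adjoin => //; apply: S_gt_frob.
- apply: numerical_semigroup_adjoin => // [y _ y_pos|]; apply: S_gt_frob; lia.
- by split=> [y -> // |]; exists h; rewrite eqxx orbT.
- by split=> [y -> // |]; exists G; rewrite eqxx orbT.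
- move=> y; case: (S y) => //=; apply/esym/negbTE/andP => -[/eqP-> /eqP]; lia.
Qed.

(* A proper numerical oversemigroup of S contains a gap x, hence G = x + (G - x). *)
Lemma symmetric_irreducible : (forall x, ~~ S x -> S (G - x)) -> ns_irreducible S.
Proof.
move=> S_sym; split=> // -[S1 [S2 [ns1 ns2 [sub1 [x1 /andP[S1x1 notSx1]]]]]].
move=> [sub2 [x2 /andP[S2x2 notSx2]]] S_eq.
have frob_in S' : numerical_semigroup S' -> (forall x, S x -> S' x) ->
    forall x, S' x -> ~~ S x -> S' G.
  move=> [_ [S'_add _]] sub x S'x notSx.
  by rewrite -(subnKC (gap_leq_frob notSx)) S'_add // sub // S_sym.
by move: notS_frob; rewrite S_eq (frob_in S1 _ _ x1) ?(frob_in S2 _ _ x2).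
Qed.

Lemma ns_symmetricP : ns_symmetric S <-> odd G /\ (forall x, ~~ S x -> S (G - x)).
Proof.
split=> [[irrS oddS] | [oddG S_sym]].
  have oddG : odd G by have := oddS _ is_frob_nat.
  by split; last exact: irreducible_symmetric.
by split=> [|f /is_frob_natE ->]; first exact: symmetric_irreducible.
Qed.

End Frobenius.

Lemma card_Lset_setminus (S A : pred nat) G n g :
    (forall x, G < x -> S x) -> ~~ S G -> ns_symmetric S ->
    (forall x, A x -> [/\ S x, G < 2 * x & x < G]) -> card_eq A n ->
    numerical_semigroup (setminus S A) -> is_frob (setminus S A) g ->
  card_eq (Lset (setminus S A) g) (2 * n).
Proof.
move=> S_gt notSG symS A_sub cardA nsT frobT.
have nsS : numerical_semigroup S by case: symS => -[].
have [oddG S_sym] := (ns_symmetricP S_gt notSG nsS).1 symS.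
set T := setminus S A in nsT frobT *.
have T_gt x : G < x -> T x.
  by move=> lt_Gx; rewrite /T /setminus S_gt //; apply/negP => /A_sub[]; lia.
have notTG : ~~ T G by rewrite /T /setminus (negbTE notSG).
have A_le x : A x -> x <= G by case/A_sub => _ _ /ltnW.
have upper_LT : upper_Lset T G =1 A.
  move=> x; rewrite /upper_Lset (Lset_natE T_gt nsT) /T /setminus.
  have [Ax | notAx] := boolP (A x).
    have [Sx G_lt x_lt] := A_sub _ Ax.
    by rewrite Sx G_lt (negbTE (notS_frob_sub notSG nsS Sx (ltnW x_lt))).
  rewrite andbT; have [// | /S_sym SGx] := boolP (S x).
  by rewrite SGx /=; apply/negbTE/andP => -[/negPn /A_sub[_ ? _]]; lia.
rewrite (is_frob_natE T_gt notTG nsT frobT).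
apply/(card_eq_count _ (Lset_leq_frob T_gt nsT)).
rewrite (count_Lset T_gt notTG nsT) oddG (eq_count upper_LT) addn0.
by rewrite ((card_eq_count _ A_le).1 cardA).
Qed.

Section SymmetricCover.

Variables (T : pred nat) (G : nat).
Hypotheses (T_gt_frob : forall x, G < x -> T x) (notT_frob : ~~ T G).
Hypothesis nsT : numerical_semigroup T.

Local Notation A := (upper_Lset T G).
Local Notation S := (fun x => T x || A x).

Lemma upper_Lset_bounds x : A x -> [/\ ~~ T x, G < 2 * x & x < G].
Proof.
rewrite /upper_Lset Lset_natE // => /andP[/andP[notTx notTGx] G_lt]; split=> //.
rewrite ltn_neqAle (gap_leq_frob T_gt_frob notTx) andbT.
by apply: contraNneq notTGx => ->; rewrite subnn (proj1 nsT).
Qed.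

Lemma numerical_semigroup_cover : numerical_semigroup S.
Proof.
apply: numerical_semigroupU => // x y Ax => [Ty | Ay].
  have [Txy | notTxy] //= := boolP (T (x + y)).
  have [_ G_lt _] := upper_Lset_bounds Ax.
  move: Ax; rewrite /upper_Lset !Lset_natE // => /andP[/andP[_ notTGx] _].
  by rewrite notTxy (notS_frob_sub_addr T_gt_frob notT_frob nsT Ty notTGx notTxy) /=; lia.
have [_ G_ltx _] := upper_Lset_bounds Ax; have [_ G_lty _] := upper_Lset_bounds Ay.
by rewrite T_gt_frob //; lia.
Qed.

Lemma cover_symmetric : odd G -> forall x, ~~ S x -> S (G - x).
Proof.
move=> oddG x; rewrite negb_or => /andP[notTx notAx].
have [// | notTGx] /= := boolP (T (G - x)).
have x_le := gap_leq_frob T_gt_frob notTx.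
rewrite /upper_Lset Lset_natE // notTGx subKn //= notTx /=.
by move: notAx; rewrite /upper_Lset Lset_natE // notTx notTGx /= -leqNgt; lia.
Qed.

Lemma card_Lset_symmetric_cover n : card_eq (Lset T G) (2 * n) ->
  [/\ ns_symmetric S, is_frob S G, (forall x, A x -> [/\ S x, G < 2 * x & x < G]),
      card_eq A n & forall x, T x = setminus S A x].
Proof.
move/(card_eq_count _ (Lset_leq_frob T_gt_frob nsT)).
rewrite (count_Lset T_gt_frob notT_frob nsT) => count_eq.
have oddG : odd G by move: count_eq; lia.
have S_gt x : G < x -> S x by move/T_gt_frob ->.
have notSG : ~~ S G by rewrite negb_or notT_frob; apply/negP => /upper_Lset_bounds[]; lia.
have A_le x : A x -> x <= G by case/upper_Lset_bounds => _ _ /ltnW.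
split.
- apply/(ns_symmetricP S_gt notSG numerical_semigroup_cover).
  by split; last exact: cover_symmetric.
- exact: is_frob_nat.
- by move=> x Ax; have [_ ? ?] := upper_Lset_bounds Ax; rewrite Ax orbT.
- by apply/(card_eq_count _ A_le); lia.
- move=> x; rewrite /setminus.
  by have [/upper_Lset_bounds[/negbTE ->] | _] := boolP (A x); rewrite ?andbT ?orbF.
Qed.

End SymmetricCover.

Local Open Scope ring_scope.

Theorem proposition19 (n : nat) :
  (forall (S A : pred nat) (f : int),
     ns_symmetric S -> is_frob S f ->
     (forall x : nat, A x -> [&& (S x), (f < (2 * x)%N%:Z) & (x%:Z < f)]) ->
     card_eq A n ->
     numerical_semigroup (setminus S A) ->
     forall g : int, is_frob (setminus S A) g ->
       card_eq (Lset (setminus S A) g) (2 * n)%N)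
  /\
  (forall (T : pred nat) (g : int),
     numerical_semigroup T -> is_frob T g ->
     card_eq (Lset T g) (2 * n)%N ->
     exists (S A : pred nat),
       [/\ ns_symmetric S, is_frob S g,
           (forall x : nat, A x -> [&& (S x), (g < (2 * x)%N%:Z) & (x%:Z < g)]),
           card_eq A n
         & forall x : nat, T x = setminus S A x]).
Proof.
split=> [S A f symS frobS A_sub cardA nsT g frobT | T g nsT frobT cardL].
  have S0 : S 0%N by case: symS => -[[]].
  have [[f_eq S_full] | [G [f_eq S_gt notSG]]] := is_frobP S0 frobS; subst f.
    have notA x : ~~ A x by apply/negP => /A_sub; lia.
    have -> : n = 0%N by apply/(card_eq_pred0 _ notA).
    by apply/card_eq_pred0 => // x; rewrite /Lset /setminus S_full (negbTE (notA x)).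
  apply: (card_Lset_setminus S_gt notSG symS _ cardA nsT frobT) => x /A_sub.
  by rewrite !ltz_nat => /and3P[].
have [[g_eq T_full] | [G [g_eq T_gt notTG]]] := is_frobP (proj1 nsT) frobT; subst g.
  have notL x : ~~ Lset T (-1) x by rewrite /Lset T_full.
  have n0 : n = 0%N by move/(card_eq_pred0 _ notL): cardL; lia.
  exists T, pred0; split=> [||//||x]; first exact: ns_symmetric_full.
  - exact: frobT.
  - exact/card_eq_pred0.
  - by rewrite /setminus andbT.
have [symS frobS A_sub cardA T_eq] := card_Lset_symmetric_cover T_gt notTG nsT cardL.
exists (fun x => T x || upper_Lset T G x), (upper_Lset T G).
split=> // x /A_sub[Sx G_lt x_lt].
by rewrite Sx !ltz_nat G_lt.
Qed.
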